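(* Let $k$ be a finite field of characteristic two and $(V,q)$ a quadratic space over $k$ with $\dim_k V=2n$ and $n\ge4$. Then the exact sequences $0\to\widehat V\to\mathrm{APs}_k(V)\to\mathrm{Sp}_k(V,\omega_q)\to1$, $0\to\widehat V\to\mathrm{Ps}_k(V,q)\to O_k(V,q)\to1$, $0\to\widehat V\to\widehat V\#_\theta\Omega_k(V,q)\to\Omega_k(V,q)\to1$ do not split.
   Context: $V$ is a finite-dimensional $k$-vector space with a quadratic form $q:V\to k$ whose polar form $B_q(v,w)=q(v+w)-q(v)-q(w)$ is non-degenerate. Let $\mathrm{Tr}:k\to\mathbb F_2$ be the absolute trace, $\omega_q(v,w)=(-1)^{\mathrm{Tr}(B_q(v,w))}$, and $\widehat V=\mathrm{Hom}(V,\mathbb C^* )$ the character group of the additive group $V$. $\mathrm{Sp}_k(V,\omega_q)=\mathrm{Sp}_k(V)$ is the group of $k$-linear automorphisms preserving $B_q$, $O_k(V,q)\le\mathrm{Sp}_k(V)$ those preserving $q$, and $\Omega_k(V,q)$ the index-$2$ subgroup of $O_k(V,q)$ of elements with Dickson invariant zero. Fix a normalized 2-cocycle $\alpha:V\times V\to\mathbb C^*$ with $\alpha(v,w)/\alpha(w,v)=\omega_q(v,w)$ and let $\mathbb C_\alpha[V]$ be the twisted group algebra (basis $u_v$, $u_vu_w=\alpha(v,w)u_{v+w}$). $\mathrm{APs}_k(V)$ (the linear affine pseudo-symplectic group, a crossed product $\widehat V\#_\theta\mathrm{Sp}_k(V)$) is the group under composition of all $\mathbb C$-algebra automorphisms $\varphi$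 of $\mathbb C_\alpha[V]$ for which there is $g\in\mathrm{Sp}_k(V)$ with $\varphi(u_v)\in\mathbb C^*u_{g(v)}$ for all $v\in V$; the map $\varphi\mapsto g$ is a surjection onto $\mathrm{Sp}_k(V)$ whose kernel is the group of automorphisms $u_v\mapsto\chi(v)u_v$, $\chi\in\widehat V$, identified with $\widehat V$. $\mathrm{Ps}_k(V,q)$ (the linear pseudo-symplectic group $\widehat V\#_\theta O_k(V,q)$) is the preimage of $O_k(V,q)$ in $\mathrm{APs}_k(V)$, and $\widehat V\#_\theta\Omega_k(V,q)$ is the preimage of $\Omega_k(V,q)$. The maps in the sequences are these inclusions and projections. *)

From HB Require Import structures.
From mathcomp Require Import all_boot all_order all_algebra all_field.
From mathcomp Require Import reals complex.
Set Implicit Arguments. Unset Strict Implicit. Unset Printing Implicit Defensive.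
Import Order.TTheory GRing.Theory Num.Theory.
Local Open Scope ring_scope.

(* The quadratic space V is modelled as the coordinate space 'rV[k]_m,   *)
(* m = dim V (every finite-dimensional k-space is isomorphic to one).   *)
Section QuadraticSpace.
Variables (k : finFieldType) (m : nat).
Local Notation V := 'rV[k]_m.

Definition polar (q : V -> k) (v w : V) : k := q (v + w) - q v - q w.

(* q is a quadratic form: q(a v) = a^2 q(v) and B_q is bilinear
   (B_q is symmetric by construction, so linearity in the first slot suffices). *)
Definition is_quadratic_form (q : V -> k) : Prop :=
  (forall (a : k) (v : V), q (a *: v) = a ^+ 2 * q v) /\
  (forall (a : k) (u v w : V), polar q (a *: u + v) w = a * polar q u w + polar q v w).

Definition polar_nondegenerate (q : V -> k) : Prop :=
  forall v : V, (forall w : V, polar q v w = 0) -> v = 0.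

Definition klinear (g : V -> V) : Prop :=
  forall (a : k) (v w : V), g (a *: v + w) = a *: g v + g w.

Definition in_Sp (q : V -> k) (g : V -> V) : Prop :=
  [/\ klinear g, bijective g & forall v w : V, polar q (g v) (g w) = polar q v w].

Definition in_O (q : V -> k) (g : V -> V) : Prop :=
  in_Sp q g /\ forall v : V, q (g v) = q v.

Definition dickson (g : V -> V) : bool := odd (\rank (1%:M - lin1_mx g)).

Definition in_Omega (q : V -> k) (g : V -> V) : Prop :=
  in_O q g /\ dickson g = false.

(* absolute trace k -> F_2 (k has 2^d elements; the value lies in {0,1}) *)
Definition abs_trace (x : k) : k := \sum_(i < logn 2 #|k|) x ^+ (2 ^ i).

End QuadraticSpace.

Section TwistedAlgebra.
Variables (k : finFieldType) (m : nat) (R : realType).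
Local Notation V := 'rV[k]_m.
Local Notation C := (R[i]).

Definition tr_sign (x : k) : C := if abs_trace x == 0 then 1 else -1.

Definition omega_q (q : V -> k) (v w : V) : C := tr_sign (polar q v w).

Definition good_cocycle (q : V -> k) (alpha : V -> V -> C) : Prop :=
  [/\ forall v w : V, alpha v w != 0,
      forall v : V, alpha 0 v = 1 /\ alpha v 0 = 1,
      forall u v w : V, alpha u v * alpha (u + v) w = alpha v w * alpha u (v + w)
    & forall v w : V, alpha v w / alpha w v = omega_q q v w].

(* The twisted group algebra C_alpha[V]: elements are functions V -> C,
   i.e. sum_v f(v) u_v. *)
Definition TAlg := {ffun V -> C}.

Definition u_ (v : V) : TAlg := [ffun x => (x == v)%:R].

(* twisted product: u_v u_w = alpha(v,w) u_{v+w} *)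
Definition tmul (alpha : V -> V -> C) (f g : TAlg) : TAlg :=
  [ffun x => \sum_(v : V) \sum_(w : V | v + w == x) f v * g w * alpha v w].

(* C-algebra automorphism of C_alpha[V] (unit is u_0) *)
Definition alg_aut (alpha : V -> V -> C) (phi : TAlg -> TAlg) : Prop :=
  [/\ forall (c : C) (f g : TAlg), phi (c *: f + g) = c *: phi f + phi g,
      bijective phi,
      forall f g : TAlg, phi (tmul alpha f g) = tmul alpha (phi f) (phi g)
    & phi (u_ 0) = u_ 0].

Definition lies_over (phi : TAlg -> TAlg) (g : V -> V) : Prop :=
  forall v : V, exists2 c : C, c != 0 & phi (u_ v) = c *: u_ (g v).

Definition in_APs (q : V -> k) (alpha : V -> V -> C) (phi : TAlg -> TAlg) : Prop :=
  alg_aut alpha phi /\ exists2 g, in_Sp q g & lies_over phi g.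

(* The extension 0 -> Vhat -> (preimage of H in APs_k(V)) -> H -> 1, for a
   subgroup H of Sp_k(V) given by the predicate P, splits: there is a group
   homomorphism s : H -> APs_k(V) with pi o s = id_H. *)
Definition ext_splits (alpha : V -> V -> C) (P : (V -> V) -> Prop) : Prop :=
  exists s : (V -> V) -> (TAlg -> TAlg),
    (forall g, P g -> alg_aut alpha (s g) /\ lies_over (s g) g) /\
    (forall g h, P g -> P h -> forall f : TAlg, s (g \o h) f = s g (s h f)).

End TwistedAlgebra.

From HB Require Import structures.
From mathcomp Require Import all_boot all_order all_algebra all_field.
From mathcomp Require Import reals complex.
From mathcomp Require Import ring zify.
From Stdlib Require Import FunctionalExtensionality.
Set Implicit Arguments. Unset Strict Implicit. Unset Printing Implicit Defensive.
Import Order.TTheory GRing.Theory Num.Theory.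
Local Open Scope ring_scope.

(* A splitting s sends an isometric involution g of (V, q) to an involutive
   automorphism s(g) of C_alpha[V] lying over g, and the cocycle relation then
   forces s(g)(u_x) = (-1)^Tr(q x) u_x for every x = w + g(w).  If x lies in the
   images of 1 + g, 1 + h and 1 + gh for commuting g, h, multiplicativity of s
   gives (-1)^Tr(q x) = ((-1)^Tr(q x))^2 = 1.  Such g, h exist in Omega once
   dim V > 6: take pairwise orthogonal independent t_0, ..., t_3 with q(t_0) = 1
   and q(t_i) = 0 otherwise, the maps v |-> v + sum_ij B(v, t_i) M_ij t_j for
   two suitable symmetric invertible 0/1-matrices M, and x = l t_0 with
   Tr(l^2) <> 0. *)

Section CharTwo.
Variable k : finFieldType.
Hypothesis char2 : 2%N \in [pchar k].

Lemma sqrf_surj (y : k) : exists x, x ^+ 2 = y.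
Proof.
have [f _ fK] := injF_bij (fmorph_inj (pFrobenius_aut char2)).
by exists (f y); rewrite -pFrobenius_autE fK.
Qed.

(* abs_trace is a polynomial map of degree |k|/2, so it cannot vanish on k. *)
Lemma abs_trace_neq0 : exists y : k, abs_trace y != 0.
Proof.
set d := logn 2 #|k|.
have card_k : #|k| = (2 ^ d)%N := card_pprimeChar char2.
have [d' d_eq] : exists d', d = d'.+1.
  by case: d card_k => [|d'] card_k; [move: (finNzRing_gt1 k); rewrite card_k | exists d'].
pose p : {poly k} := \sum_(i < d) 'X^(2 ^ i).
have size_p : size p = (2 ^ d').+1.
  rewrite /p d_eq big_ord_recr /= addrC size_polyDl size_polyXn //.
  rewrite ltnS (leq_trans (size_sum _ _ _)) //; apply/bigmax_leqP => i _.
  by rewrite size_polyXn ltn_exp2l.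
apply/existsP; apply: contraT; rewrite negb_exists => /forallP trace0.
have: (size (enum k) < size p)%N.
  apply: max_poly_roots; last exact: enum_uniq.
    by rewrite -size_poly_eq0 size_p.
  apply/allP => y _; rewrite /root /p horner_sum.
  by under eq_bigr do rewrite hornerXn; have := trace0 y; rewrite negbK.
by rewrite -cardE card_k size_p d_eq ltnS leq_exp2l // ltnn.
Qed.

Lemma abs_trace_sqr_neq0 : exists l : k, abs_trace (l ^+ 2) != 0.
Proof. by have [y ?] := abs_trace_neq0; have [l ly] := sqrf_surj y; exists l; rewrite ly. Qed.

End CharTwo.

Lemma addv_pchar2 (K : nzRingType) (V : lmodType K) (v : V) :
  2%N \in [pchar K] -> v + v = 0.
Proof. by move=> char2; rewrite -[v + v]/(v *+ 2) -scaler_nat (pcharf0 char2) scale0r. Qed.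

Section Splitting.
Variables (k : finFieldType) (m : nat) (R : realType).
Variables (q : 'rV[k]_m -> k) (alpha : 'rV[k]_m -> 'rV[k]_m -> R[i]).
Hypotheses (char2 : 2%N \in [pchar k]) (cocycle : good_cocycle q alpha).
Local Notation V := 'rV[k]_m.
Local Notation A := (TAlg k m R).
Local Notation u := (u_ R).

Lemma scaleCE (c z : R[i]) : c *: z = c * z. Proof. by []. Qed.

Definition isometric_involution (g : V -> V) :=
  [/\ involutive g, {morph g : v w / v + w} & forall v, q (g v) = q v].

Lemma isometric_involution_comp g h : isometric_involution g ->
  isometric_involution h -> (forall v, g (h v) = h (g v)) ->
  isometric_involution (g \o h).
Proof.
case=> gK gD gq [hK hD hq] gh; split=> [v|v w|v] /=; last by rewrite gq hq.
  by rewrite -gh hK gK.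
by rewrite hD gD.
Qed.

Lemma tmul_u v w : tmul alpha (u v) (u w) = alpha v w *: u (v + w).
Proof.
apply/ffunP => x; rewrite !ffunE (bigD1 v) //= [X in _ + X]big1 ?addr0 => [|a av].
  under eq_bigr do rewrite [u v v]ffunE eqxx mul1r.
  have [<-|vw_x] := eqVneq (v + w) x.
    rewrite (bigD1 w) //= [X in _ + X]big1 ?addr0 => [|b /andP[_ bw]].
      by rewrite ffunE !eqxx mul1r [RHS]mulr1.
    by rewrite ffunE (negbTE bw) mul0r.
  rewrite mulr0n scaler0 big1 // => b /eqP vb_x.
  rewrite ffunE; case: eqP => [bw|_]; last by rewrite mul0r.
  by move: vw_x; rewrite -vb_x bw eqxx.
by apply: big1 => b _; rewrite ffunE (negbTE av) !mul0r.
Qed.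

Lemma tmulZ a b f g : tmul alpha (a *: f) (b *: g) = (a * b) *: tmul alpha f g.
Proof.
apply/ffunP => x; rewrite !ffunE scaler_sumr; apply: eq_bigr => v _.
rewrite scaler_sumr; apply: eq_bigr => w _; rewrite !ffunE.
by rewrite !scaleCE mulrACA !mulrA.
Qed.

Lemma alg_autZ phi : alg_aut alpha phi -> forall c f, phi (c *: f) = c *: phi f.
Proof.
case=> lin _ _ _ c f; have phi0 : phi 0 = 0.
  by have := lin 1 0 0; rewrite scaler0 addr0 scale1r -{1}(add0r (phi 0)) => /addIr.
by rewrite -[c *: f]addr0 lin phi0 addr0.
Qed.

(* Applying phi to u_w u_(g w) = alpha(w, g w) u_x determines the coefficient of
   phi(u_x) as alpha(g w, w) / alpha(w, g w) = omega_q(g w, w). *)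
Lemma alg_aut_fixed_coef g phi : isometric_involution g -> alg_aut alpha phi ->
  lies_over phi g -> involutive phi ->
  forall w, phi (u (w + g w)) = tr_sign R (q (w + g w)) *: u (w + g w).
Proof.
case=> gK gD gq aut over_g phiK w; have phiZ := alg_autZ aut.
have [_ _ phiM _] := aut; have [alpha_neq0 _ _ alpha_omega] := cocycle.
have [c1 _ e1] := over_g w; have [c2 _ e2] := over_g (g w); rewrite gK in e2.
have c12 : c1 * c2 = 1.
  have /(congr1 (fun f : A => f w)) := phiK (u w).
  by rewrite e1 phiZ e2 scalerA !ffunE eqxx scaleCE mulr1.
set x := w + g w; have gx : g x = x by rewrite /x gD gK addrC.
have [c _ ex] := over_g x; rewrite gx in ex.
have c_alpha : alpha w (g w) * c = alpha (g w) w.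
  have /(congr1 (fun f : A => f x)) := phiM (u w) (u (g w)).
  rewrite tmul_u phiZ ex e1 e2 tmulZ c12 scale1r tmul_u scalerA !ffunE.
  by rewrite /x [g w + w]addrC eqxx !scaleCE !mulr1.
rewrite ex; congr (_ *: _).
have -> : c = alpha (g w) w / alpha w (g w) by rewrite -c_alpha mulrC mulKf.
rewrite alpha_omega /omega_q /polar gq [g w + w]addrC -/x -addrA -opprD.
by rewrite addrr_pchar2 // subr0.
Qed.

Lemma ext_splits_abs_trace0 (P : (V -> V) -> Prop) g h x w1 w2 w3 :
  ext_splits alpha P -> P id -> P g -> P h -> P (g \o h) ->
  isometric_involution g -> isometric_involution h -> (forall v, g (h v) = h (g v)) ->
  x = w1 + g w1 -> x = w2 + h w2 -> x = w3 + g (h w3) -> abs_trace (q x) = 0.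
Proof.
case=> s [sP sM] Pid Pg Ph Pgh ig ih gh e1 e2 e3.
have s_id f : s id f = f.
  have [[_ [? sK _] _ _] _] := sP id Pid.
  by apply: (can_inj sK); rewrite -(sM id id Pid Pid).
have coef g0 w : P g0 -> isometric_involution g0 -> x = w + g0 w ->
    s g0 (u x) = tr_sign R (q x) *: u x.
  move=> Pg0 ig0 ->; have [aut over] := sP g0 Pg0; have [g0K _ _] := ig0.
  apply: (alg_aut_fixed_coef ig0 aut over) => f.
  rewrite -sM // (_ : g0 \o g0 = id) ?s_id //.
  by apply: functional_extensionality => v; apply: g0K.
have := sM g h Pg Ph (u x).
rewrite (coef _ w3 Pgh (isometric_involution_comp ig ih gh) e3) (coef _ w2 Ph ih e2).
rewrite (alg_autZ (sP g Pg).1) (coef _ w1 Pg ig e1) scalerA.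
move=> /(congr1 (fun f : A => f x)); rewrite !ffunE eqxx !scaleCE !mulr1.
rewrite /tr_sign; case: eqP => // _ /eqP; rewrite mulrNN mulr1 eq_sym -subr_eq0.
by rewrite opprK -mulr2n pnatr_eq0.
Qed.

End Splitting.

Section MatrixForm.
Variables (K : fieldType) (n : nat).
Implicit Types (M : 'M[K]_n) (x y : 'rV[K]_n).

Definition mxform M x y := (x *m M *m y^T) 0 0.

Lemma mxformC M x y : M^T = M -> mxform M x y = mxform M y x.
Proof.
move=> symM; rewrite /mxform.
have -> : (y *m M *m x^T) 0 0 = (y *m M *m x^T)^T 0 0 by rewrite [RHS]mxE.
by rewrite !trmx_mul trmxK symM mulmxA.
Qed.

Lemma mxform_selfD M x y : M^T = M -> 2%N \in [pchar K] ->
  mxform M (x + y) (x + y) = mxform M x x + mxform M y y.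
Proof.
move=> symM char2; have entryD (A B : 'M[K]_1) : (A + B) 0 0 = A 0 0 + B 0 0.
  by rewrite mxE.
rewrite /mxform linearD /= mulmxDl !mulmxDr !mulmxDl !entryD.
by rewrite -!/(mxform _ _ _) (mxformC y x symM) -addrA addKr_pchar2.
Qed.

End MatrixForm.

(* Both sides are additive and 2-homogeneous in x and agree on the unit vectors. *)
Lemma mxform_self (K : fieldType) n (M : 'M[K]_n.+1) (x : 'rV_n.+1) :
  2%N \in [pchar K] -> M^T = M -> (forall i, M i i = M i 0 ^+ 2) ->
  mxform M x x = (x *m M) 0 0 ^+ 2.
Proof.
move=> char2 symM diagM.
have formZ a i : mxform M (a *: delta_mx 0 i) (a *: delta_mx 0 i) = a ^+ 2 * M i i.
  rewrite /mxform linearZ /= -!scalemxAl -scalemxAr trmx_delta -rowE -colE.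
  by rewrite !mxE mulrA -expr2.
have formS (r : seq 'I_n.+1) a :
    mxform M (\sum_(i <- r) a i *: delta_mx 0 i) (\sum_(i <- r) a i *: delta_mx 0 i)
    = \sum_(i <- r) a i ^+ 2 * M i i.
  elim: r => [|i r IH]; first by rewrite !big_nil /mxform !mul0mx mxE.
  by rewrite !big_cons mxform_selfD // IH formZ.
rewrite [in mxform _ _ _](row_sum_delta x) formS mxE -pFrobenius_autE rmorph_sum.
by apply: eq_bigr => i _; rewrite -[RHS]/((x 0 i * M i 0) ^+ 2) exprMn diagM.
Qed.

(* The conditions under which v |-> v + sum_ij B(v, t_i) M_ij t_j below lies in
   Omega: symmetry makes it preserve B, the diagonal condition makes it preserve
   q, and invertibility makes rank(1 - g) = r + 1. *)
Definition admissible_mx (K : fieldType) r (M : 'M[K]_r.+1) :=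
  [/\ M^T = M, forall i, M i i = M i 0 ^+ 2 & M \in unitmx].

Section Witnesses.
Variable K : fieldType.
Hypothesis char2 : 2%N \in [pchar K].

Definition mx01 n (s : seq (seq nat)) : 'M[K]_n :=
  \matrix_(i, j) (nth 0%N (nth [::] s i) j)%:R.

Definition M1 := mx01 4
  [:: [:: 0; 1; 0; 0]; [:: 1; 1; 0; 0]; [:: 0; 0; 0; 1]; [:: 0; 0; 1; 0]]%N.
Definition M2 := mx01 4
  [:: [:: 0; 0; 1; 0]; [:: 0; 0; 0; 1]; [:: 1; 0; 1; 1]; [:: 0; 1; 1; 0]]%N.
Definition M3 := mx01 4
  [:: [:: 0; 1; 1; 0]; [:: 1; 1; 0; 1]; [:: 1; 0; 1; 0]; [:: 0; 1; 0; 0]]%N.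

Lemma natr_char2 a b : odd a = odd b -> a%:R = b%:R :> K.
Proof.
by rewrite -(GRing.natr_mod_pchar char2 a) -(GRing.natr_mod_pchar char2 b) !modn2 => ->.
Qed.

Ltac mx01_entries :=
  case=> [[|[|[|[|?]]]] ?] //; case=> [[|[|[|[|?]]]] ?] //;
  rewrite !mxE ?big_ord_recl ?big_ord0 ?addr0 ?mxE -?natrM -?natrD; exact: natr_char2.

Ltac mx01_admissible inv :=
  split; [ apply/matrixP; hnf; mx01_entries
         | case=> [[|[|[|[|?]]]] ?] //; rewrite !mxE -natrX; exact: natr_char2
         | apply: (proj1 (@mulmx1_unit _ _ _ (mx01 4 inv) _));
           apply/matrixP; hnf; mx01_entries ].

Lemma M1_admissible : admissible_mx M1.
Proof.
mx01_admissible
  [:: [:: 1; 1; 0; 0]; [:: 1; 0; 0; 0]; [:: 0; 0; 0; 1]; [:: 0; 0; 1; 0]]%N.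
Qed.

Lemma M2_admissible : admissible_mx M2.
Proof.
mx01_admissible
  [:: [:: 1; 1; 1; 0]; [:: 1; 0; 0; 1]; [:: 1; 0; 0; 0]; [:: 0; 1; 0; 0]]%N.
Qed.

Lemma M3_admissible : admissible_mx M3.
Proof.
mx01_admissible
  [:: [:: 1; 0; 1; 1]; [:: 0; 0; 0; 1]; [:: 1; 0; 0; 1]; [:: 1; 1; 1; 0]]%N.
Qed.

Lemma M1_add_M2 : M1 + M2 = M3.
Proof. by apply/matrixP; hnf; mx01_entries. Qed.

End Witnesses.

Lemma row_free_col_mx (F : fieldType) r m (S : 'M[F]_(r, m)) (v : 'rV_m) :
  row_free S -> ~~ (v <= S)%MS -> row_free (col_mx S v).
Proof.
move=> freeS vS; have ltS : (S < S + v)%MS.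
  by rewrite ltmxE addsmxSl; apply: contra vS; apply: submx_trans (addsmxSr S v).
have := rank_leq_row (col_mx S v); rewrite /row_free -addsmxE eqn_leq => ->.
by move: ltS; rewrite ltmxErank (eqP freeS) addn1 => /andP[].
Qed.

Lemma row_col_mx_rV (F : fieldType) r m (S : 'M[F]_(r, m)) (v : 'rV_m) i :
  row i (col_mx S v) = if split i is inl j then row j S else v.
Proof.
by rewrite -{1}(splitK i); case: (split i) => j /=; rewrite ?rowKu // rowKd row_id.
Qed.

Section QuadraticSpace.
Variables (k : finFieldType) (m : nat) (q : 'rV[k]_m -> k).
Hypotheses (qform : is_quadratic_form q) (char2 : 2%N \in [pchar k]).
Local Notation B := (polar q).

Lemma qform0 : q 0 = 0.
Proof. by have := qform.1 0 0; rewrite scale0r expr0n mul0r. Qed.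

Lemma qformD u v : q (u + v) = q u + q v + B u v.
Proof. by rewrite /polar; ring. Qed.

Lemma polarC u v : B u v = B v u.
Proof. by rewrite /polar [u + v]addrC; ring. Qed.

Lemma polar0l w : B 0 w = 0.
Proof. by rewrite /polar add0r qform0 subr0 subrr. Qed.

Lemma polarDl u v w : B (u + v) w = B u w + B v w.
Proof. by have := qform.2 1 u v w; rewrite scale1r mul1r. Qed.

Lemma polarZl a u w : B (a *: u) w = a * B u w.
Proof. by have := qform.2 a u 0 w; rewrite addr0 polar0l addr0. Qed.

Lemma polarDr u v w : B w (u + v) = B w u + B w v.
Proof. by rewrite polarC polarDl !(polarC w). Qed.

Lemma polarZr a u w : B w (a *: u) = a * B w u.
Proof. by rewrite polarC polarZl polarC. Qed.

Lemma polar_sumr I r (P : pred I) (F : I -> 'rV_m) w :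
  B w (\sum_(i <- r | P i) F i) = \sum_(i <- r | P i) B w (F i).
Proof. by apply: (big_morph _ (fun u v => polarDr u v w)); rewrite polarC polar0l. Qed.

Lemma polar_self v : B v v = 0.
Proof.
rewrite /polar -[v + v]/(v *+ 2) -scaler_nat (pcharf0 char2) scale0r qform0.
by rewrite sub0r -opprD addrr_pchar2 // oppr0.
Qed.

Definition polar_mx r (S : 'M[k]_(r, m)) : 'M[k]_(m, r) :=
  \matrix_(i, j) B (delta_mx 0 i) (row j S).

Lemma polar_mxE r (S : 'M_(r, m)) v j : (v *m polar_mx S) 0 j = B v (row j S).
Proof.
rewrite mxE [in RHS](row_sum_delta v) polarC polar_sumr.
by apply: eq_bigr => i _; rewrite polarC polarZl mxE.
Qed.

Lemma polar_mulmx r (S : 'M_(r, m)) v (y : 'rV_r) :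
  B v (y *m S) = (y *m (v *m polar_mx S)^T) 0 0.
Proof.
rewrite mulmx_sum_row polar_sumr mxE.
by apply: eq_bigr => j _; rewrite polarZr mxE polar_mxE mulrC.
Qed.

Lemma polar_mx_linv r (S : 'M_(r, m)) :
  polar_nondegenerate q -> row_free S -> exists L, L *m polar_mx S = 1%:M.
Proof.
move=> nondeg freeS.
suff /row_freeP[L PL] : row_free (polar_mx S)^T.
  by exists L^T; rewrite -[polar_mx S]trmxK -trmx_mul PL trmx1.
apply/inj_row_free => c c0; apply/eqP; rewrite -(mulmx_free_eq0 _ freeS).
apply/eqP/nondeg => w.
by rewrite polarC polar_mulmx trmx_mul mulmxA c0 mul0mx mxE.
Qed.

Definition singular_frame r (S : 'M[k]_(r, m)) :=
  [/\ row_free S, forall i j, B (row i S) (row j S) = 0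
    & forall i : 'I_r, q (row i S) = (i == 0%N :> nat)%:R].

Lemma orthogonal_notin r (S : 'M[k]_(r, m)) : (r.*2 < m)%N ->
  exists2 v, ~~ (v <= S)%MS & forall j, B (row j S) v = 0.
Proof.
move=> rm; pose W := kermx (polar_mx S).
have /row_subPn[i WiS] : ~~ (W <= S)%MS.
  apply: contraL rm => /mxrankS; rewrite mxrank_ker.
  by have := rank_leq_col (polar_mx S); have := rank_leq_row S; lia.
exists (row i W) => // j.
by rewrite polarC -polar_mxE -row_mul mulmx_ker row0 mxE.
Qed.

(* An orthogonal vector outside S, corrected by a multiple of row 0 S to become
   singular. *)
Lemma singular_frame_extend r (S : 'M[k]_(r.+1, m)) : ((r.+1).*2 < m)%N ->
  singular_frame S -> exists v : 'rV_m, singular_frame (col_mx S v).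
Proof.
move=> rm [freeS orthS qS]; have [v0 v0S v0orth] := orthogonal_notin S rm.
have [l ql] := sqrf_surj char2 (q v0).
set t0 := row 0 S; pose v := v0 + l *: t0.
have vS : ~~ (v <= S)%MS.
  apply: contra v0S => vS; rewrite -[v0](addrK (l *: t0)) -/v.
  by rewrite addmx_sub // -scaleNr scalemx_sub // row_sub.
have vorth j : B (row j S) v = 0 by rewrite polarDr polarZr v0orth orthS mulr0 addr0.
have qv : q v = 0.
  rewrite qformD qform.1 qS mulr1 ql polarZr polarC v0orth mulr0 addr0.
  exact: addrr_pchar2 char2 _.
exists v; split; first exact: row_free_col_mx.
  move=> i j; rewrite !row_col_mx_rV.
  case: (split i) => i'; case: (split j) => j' //; first by rewrite polarC.
  exact: polar_self.
by move=> i; rewrite row_col_mx_rV -{2}(splitK i); case: (split i) => j.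
Qed.

Lemma singular_frame_exists : polar_nondegenerate q -> (6 < m)%N ->
  exists T : 'M_(4, m), singular_frame T.
Proof.
move=> nondeg m_gt6.
have [a qa] : exists a, q a != 0.
  apply/existsP; apply: contraT; rewrite negb_exists => /forallP q0.
  have m_gt0 : (0 < m)%N by apply: leq_trans m_gt6.
  have : delta_mx 0 (Ordinal m_gt0) = 0 :> 'rV[k]_m.
    by apply: nondeg => w; rewrite /polar !(eqP (negbNE (q0 _))) subrr subr0.
  by move/matrixP/(_ 0 (Ordinal m_gt0)); rewrite !mxE !eqxx /= => /eqP; rewrite oner_eq0.
have [mu mu_qa] := sqrf_surj char2 (q a)^-1.
pose t0 := mu *: a; have qt0 : q t0 = 1 by rewrite qform.1 mu_qa mulVf.
have frame1 : singular_frame t0.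
  split=> [|i j|i]; rewrite ?row_id ?polar_self //.
    rewrite /row_free rank_rV; case: (eqVneq t0 0) => // t0_0.
    by move: qt0; rewrite t0_0 qform0 => /eqP; rewrite eq_sym oner_eq0.
  by rewrite (ord1 i) qt0.
have m_gt2 : (1.*2 < m)%N by apply: leq_trans m_gt6.
have m_gt4 : (2.*2 < m)%N by apply: leq_trans m_gt6.
have [t1 frame2] := singular_frame_extend m_gt2 frame1.
have [t2 frame3] := singular_frame_extend m_gt4 frame2.
have [t3 frame4] := singular_frame_extend (m_gt6 : 3.*2 < m)%N frame3.
by exists (col_mx (col_mx (col_mx t0 t1) t2) t3).
Qed.

Lemma in_Omega_id : in_Omega q id.
Proof.
split; last first.
  rewrite /dickson (_ : lin1_mx id = 1%:M) ?subrr ?mxrank0 //.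
  by apply/matrixP => i j; rewrite !mxE eqxx andTb eq_sym.
by do 2!split=> //; exists id.
Qed.

Section FrameMap.
Hypothesis nondeg : polar_nondegenerate q.
Variables (r : nat) (T : 'M[k]_(r.+1, m)).
Hypothesis frameT : singular_frame T.
Local Notation P := (polar_mx T).

(* With t_i = row i T, frame_map M v = v + sum_ij B(v, t_i) M_ij t_j. *)
Definition frame_mx (M : 'M[k]_r.+1) : 'M[k]_m := P *m M *m T.
Definition frame_map M (v : 'rV[k]_m) := v *m (1%:M + frame_mx M).

Lemma frame_polar_mx : T *m P = 0.
Proof.
have [_ orthT _] := frameT; apply/row_matrixP => i.
by rewrite row_mul row0; apply/rowP => j; rewrite polar_mxE orthT mxE.
Qed.

Lemma polar_frame_span (y z : 'rV_r.+1) : B (y *m T) (z *m T) = 0.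
Proof. by rewrite polar_mulmx -mulmxA frame_polar_mx mulmx0 trmx0 mulmx0 mxE. Qed.

Lemma qform_frame_span (y : 'rV_r.+1) : q (y *m T) = y 0 0 ^+ 2.
Proof.
have [_ orthT qT] := frameT.
have qsum (s : seq 'I_r.+1) :
    q (\sum_(i <- s) y 0 i *: row i T) = \sum_(i <- s) y 0 i ^+ 2 * q (row i T).
  elim: s => [|i s IH]; first by rewrite !big_nil qform0.
  rewrite !big_cons qformD IH qform.1 polarZl polar_sumr.
  rewrite [X in y 0 i * X]big1 ?mulr0 ?addr0 // => j _.
  by rewrite polarZr orthT mulr0.
rewrite mulmx_sum_row qsum (bigD1 ord0) //= qT mulr1 big1 ?addr0 // => i i0.
by have /negbTE i0' : (i : nat) != 0%N := i0; rewrite qT i0' mulr0.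
Qed.

Lemma frame_mapE M v : frame_map M v = v + v *m P *m M *m T.
Proof. by rewrite /frame_map mulmxDr mulmx1 /frame_mx !mulmxA. Qed.

Lemma frame_mapD M M' v : frame_map M (frame_map M' v) = frame_map (M + M') v.
Proof.
have frame_mxM : frame_mx M' *m frame_mx M = 0.
  by rewrite /frame_mx !mulmxA -(mulmxA _ T) frame_polar_mx mulmx0 !mul0mx.
rewrite /frame_map -mulmxA mulmxDl mul1mx [frame_mx M' *m _]mulmxDr mulmx1.
by rewrite frame_mxM addr0 -addrA /frame_mx -mulmxDl -mulmxDr.
Qed.

Lemma frame_map_invol M : involutive (frame_map M).
Proof.
move=> v; rewrite frame_mapD addv_pchar2 //.
by rewrite /frame_map /frame_mx mulmx0 mul0mx addr0 mulmx1.
Qed.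

Lemma frame_map_linear M : klinear (frame_map M).
Proof. by move=> a v w; rewrite /frame_map mulmxDl scalemxAl. Qed.

Lemma frame_map_polar M : M^T = M ->
  forall v w, B (frame_map M v) (frame_map M w) = B v w.
Proof.
move=> symM v w; rewrite !frame_mapE polarDl !polarDr polar_frame_span addr0.
rewrite [B (_ *m T) w]polarC !polar_mulmx -!/(mxform _ _ _) (mxformC (v *m P)) //.
by rewrite -addrA addrr_pchar2 // addr0.
Qed.

Lemma frame_map_qform M : M^T = M -> (forall i, M i i = M i 0 ^+ 2) ->
  forall v, q (frame_map M v) = q v.
Proof.
move=> symM diagM v; rewrite frame_mapE qformD qform_frame_span polar_mulmx.
by rewrite -/(mxform _ _ _) mxform_self // -addrA addrr_pchar2 // addr0.
Qed.

Lemma frame_map_dickson M : M \in unitmx -> dickson (frame_map M) = odd r.+1.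
Proof.
move=> unitM; have [freeT _ _] := frameT; have [L LP] := polar_mx_linv nondeg freeT.
have lin1E : lin1_mx (frame_map M) = 1%:M + frame_mx M.
  by apply/matrixP => i j; rewrite mxE /frame_map -rowE mxE.
rewrite /dickson lin1E opprD addrA subrr add0r mxrank_opp /frame_mx mxrankMfree //.
congr odd; apply/eqP; rewrite eqn_leq (leq_trans (mxrankM_maxr _ _)) ?rank_leq_row //.
by rewrite -{1}(mxrank_unit unitM) -{1}[M]mul1mx -LP -mulmxA mxrankM_maxr.
Qed.

Lemma frame_map_Omega M : admissible_mx M -> ~~ odd r.+1 -> in_Omega q (frame_map M).
Proof.
case=> symM diagM unitM even_r; split; last by rewrite frame_map_dickson // (negbTE even_r).
split; last exact: frame_map_qform.
split; [exact: frame_map_linear | exact: inv_bij (frame_map_invol M) | exact: frame_map_polar].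
Qed.

Lemma frame_map_isometric_involution M : admissible_mx M ->
  isometric_involution q (frame_map M).
Proof.
case=> symM diagM _; split; [exact: frame_map_invol | | exact: frame_map_qform].
by move=> v w; rewrite /frame_map mulmxDl.
Qed.

Lemma frame_map_hits M : M \in unitmx ->
  forall l, exists w, l *: row 0 T = w + frame_map M w.
Proof.
move=> unitM l; have [freeT _ _] := frameT; have [L LP] := polar_mx_linv nondeg freeT.
exists (l *: (delta_mx 0 0 *m invmx M *m L)).
rewrite /frame_map mulmxDr mulmx1 addrA addv_pchar2 // add0r /frame_mx -!scalemxAl.
by rewrite !mulmxA -(mulmxA _ L) LP mulmx1 -(mulmxA _ (invmx M)) mulVmx // mulmx1 -rowE.
Qed.

End FrameMap.

Lemma ext_Omega_not_split (R : realType) (alpha : 'rV[k]_m -> 'rV[k]_m -> R[i]) :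
  good_cocycle q alpha -> polar_nondegenerate q -> (6 < m)%N ->
  ~ ext_splits alpha (in_Omega q).
Proof.
move=> cocycle nondeg m_gt6 split; have [T frameT] := singular_frame_exists nondeg m_gt6.
have [M1a M2a M3a] := And3 (M1_admissible char2) (M2_admissible char2) (M3_admissible char2).
pose g := frame_map T (M1 k); pose h := frame_map T (M2 k).
have gh : g \o h = frame_map T (M3 k).
  by apply: functional_extensionality => v; rewrite /g /h /= frame_mapD // M1_add_M2.
have [l trl] := abs_trace_sqr_neq0 char2; pose x := l *: row 0 T.
have [_ _ qT] := frameT; have qx : q x = l ^+ 2 by rewrite qform.1 qT mulr1.
have [[_ _ M1u] [_ _ M2u] [_ _ M3u]] := And3 M1a M2a M3a.
have [w1 e1] := frame_map_hits nondeg frameT M1u l.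
have [w2 e2] := frame_map_hits nondeg frameT M2u l.
have [w3 e3] := frame_map_hits nondeg frameT M3u l; rewrite -gh in e3.
apply: (negP trl); apply/eqP; rewrite -qx.
apply: (ext_splits_abs_trace0 char2 cocycle split in_Omega_id _ _ _ _ _ _ e1 e2 e3).
- exact: frame_map_Omega.
- exact: frame_map_Omega.
- by rewrite gh; apply: frame_map_Omega.
- exact: frame_map_isometric_involution.
- exact: frame_map_isometric_involution.
- by move=> v; rewrite /g /h !frame_mapD // addrC.
Qed.

End QuadraticSpace.

Lemma ext_splitsS (k : finFieldType) (m : nat) (R : realType)
    (alpha : 'rV[k]_m -> 'rV[k]_m -> R[i]) (P P' : ('rV[k]_m -> 'rV[k]_m) -> Prop) :
  (forall g, P' g -> P g) -> ext_splits alpha P -> ext_splits alpha P'.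
Proof.
move=> P'P [s [sP sM]]; exists s.
by split=> [g /P'P|g h /P'P Pg /P'P]; [apply: sP | apply: sM].
Qed.

Theorem proposition5p3 (k : finFieldType) (n : nat) (R : realType)
  (q : 'rV[k]_(n.*2) -> k) (alpha : 'rV[k]_(n.*2) -> 'rV[k]_(n.*2) -> R[i]) :
  2%N \in [pchar k] ->
  (4 <= n)%N ->
  is_quadratic_form q ->
  polar_nondegenerate q ->
  good_cocycle q alpha ->
  [/\ ~ ext_splits alpha (in_Sp q),
      ~ ext_splits alpha (in_O q)
    & ~ ext_splits alpha (in_Omega q)].
Proof.
move=> char2 n_ge4 qform nondeg cocycle.
have notOmega : ~ ext_splits alpha (in_Omega q).
  by apply: ext_Omega_not_split => //; rewrite -addnn; lia.
split=> // /ext_splitsS split; apply: notOmega; apply: split => g; first by case=> [[]].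
by case.
Qed.
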